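(* Let $n\in\mathbb{N}$ and let $G=(V,E)$ be a simple undirected graph with vertex set $V=[n]=\{1,\dots,n\}$. Then there exist a face $F$ of the linear ordering polytope $\mathrm{LOP}(2n)$ and an affine map $\alpha$ with $\alpha(F)=\mathrm{STAB}(G)$, i.e. the stable set polytope $\mathrm{STAB}(G)$ is an affine projection of a face of $\mathrm{LOP}(2n)$.
   Context: For $m\in\mathbb{N}$, a linear order on $[m]$ is a set $L$ of ordered pairs $(i,j)$, $i\neq j$, such that for each pair $i\neq j$ exactly one of $(i,j),(j,i)$ lies in $L$, and $L$ is transitive ($(i,j),(j,k)\in L\Rightarrow (i,k)\in L$). Its characteristic vector $\mathbf{y}\in\{0,1\}^{m(m-1)/2}$ has coordinates $y_{ij}$, $1\le i<j\le m$, with $y_{ij}=1$ if $(i,j)\in L$ and $y_{ij}=0$ if $(j,i)\in L$. The linear ordering polytope $\mathrm{LOP}(m)$ is the convex hull of all such characteristic vectors. The stable set polytope of a graph $G=([n],E)$ is $\mathrm{STAB}(G)=\mathrm{conv}\{\mathbf{x}\in\{0,1\}^n : x_i+x_j\le 1 \text{ for every edge } \{i,j\}\in E\}$. A hyperplane $H$ is supporting for a polytope $P$ if $P\cap H\neq\emptyset$ and $P$ lies entirely on one side of $H$; a face of $P$ is the intersection of $P$ with one or several supporting hyperplanes. A polytope $Q$ is an (affine) projection of a polytope $P$ if there is an affine map $\alpha$ with $\alpha(P)=Q$. *)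

From HB Require Import structures.
From mathcomp Require Import all_boot all_order all_algebra.
From mathcomp Require Import reals.
Set Implicit Arguments. Unset Strict Implicit. Unset Printing Implicit Defensive.
Import Order.TTheory GRing.Theory Num.Theory.
Local Open Scope ring_scope.

Notation pt R T := {ffun T -> R}.

Definition conv (R : realType) (T : finType) (S : pt R T -> Prop) : pt R T -> Prop :=
  fun x => exists (k : nat) (p : 'I_k -> pt R T) (w : 'I_k -> R),
    [/\ forall i, S (p i), forall i, 0 <= w i, \sum_i w i = 1
      & forall t, x t = \sum_i w i * p i t].

(* Coordinates of R^(m(m-1)/2): pairs (i,j) with i < j. *)
Definition lop_idx (m : nat) := {p : 'I_m * 'I_m | (p.1 < p.2)%N}.

Definition linear_order (m : nat) (L : rel 'I_m) : Prop :=
  [/\ forall i, ~~ L i i,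
      forall i j, i != j -> (L i j <-> ~~ L j i)
    & forall i j k, L i j -> L j k -> L i k].

Definition char_vec (R : realType) (m : nat) (L : rel 'I_m) : pt R (lop_idx m) :=
  [ffun p => if L (val p).1 (val p).2 then 1 else 0].

Definition LOP (R : realType) (m : nat) : pt R (lop_idx m) -> Prop :=
  conv (fun y => exists L : rel 'I_m, linear_order L /\ y = char_vec R L).

Definition simple_graph (n : nat) (e : rel 'I_n) : Prop :=
  (forall i, ~~ e i i) /\ (forall i j, e i j = e j i).

Definition STAB (R : realType) (n : nat) (e : rel 'I_n) : pt R 'I_n -> Prop :=
  conv (fun x => (forall i, x i = 0 \/ x i = 1) /\
                 (forall i j, e i j -> x i + x j <= 1)).

Definition dotp (R : realType) (T : finType) (a x : pt R T) : R :=
  \sum_t a t * x t.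

Definition supporting (R : realType) (T : finType) (P : pt R T -> Prop)
    (a : pt R T) (b : R) : Prop :=
  (exists x, P x /\ dotp a x = b) /\
  ((forall x, P x -> dotp a x <= b) \/ (forall x, P x -> b <= dotp a x)).

Definition face (R : realType) (T : finType) (P F : pt R T -> Prop) : Prop :=
  exists (k : nat) (a : 'I_k.+1 -> pt R T) (b : 'I_k.+1 -> R),
    (forall l, supporting P (a l) (b l)) /\
    (forall x, F x <-> (P x /\ forall l, dotp (a l) x = b l)).

Definition affine_map (R : realType) (T U : finType)
    (alpha : pt R T -> pt R U) : Prop :=
  exists (M : U -> T -> R) (c : pt R U),
    forall x, alpha x = [ffun u => \sum_t M u t * x t + c u].

From HB Require Import structures.
From mathcomp Require Import all_boot all_order all_algebra.
From mathcomp Require Import reals.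
From mathcomp Require Import zify lra.
Set Implicit Arguments. Unset Strict Implicit.
Import Order.TTheory GRing.Theory Num.Theory.
Local Open Scope ring_scope.

(* Give every vertex v of G a low copy v and a high copy n + v in [2n].  The
   coordinates y_(v, n+u) of LOP(2n), for uv an edge in either orientation,
   are nonnegative, so their sum is zero on a face F, whose vertices are the
   linear orders putting n + u before v for every such pair.  Projecting onto
   the diagonal coordinates y_(v, n+v) sends such an order to the incidence
   vector of {v | v before n + v}, which is stable: for an edge uv inside it,
   u < n+u < v < n+v < u would be a cycle.  Conversely a stable set S is the
   image of the order listing n+v (v not in S), then v (v in S), then n+v
   (v in S), then v (v not in S).  Since a face cut from conv V by a valid
   inequality is the hull of the vertices it contains, and affine maps
   commute with convex hulls, the projection of F is STAB(G). *)

Section ConvexHull.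
Variables (R : realType) (T : finType).
Implicit Types (S : pt R T -> Prop) (a x : pt R T) (b : R).

Lemma conv_pt S x : S x -> conv S x.
Proof.
move=> Sx; exists 1%N, (fun=> x), (fun=> 1).
by split=> // [|t]; rewrite big_ord1 ?mul1r.
Qed.

Lemma dotp_conv_comb a x k (w : 'I_k -> R) (p : 'I_k -> pt R T) :
  (forall t, x t = \sum_i w i * p i t) -> dotp a x = \sum_i w i * dotp a (p i).
Proof.
move=> xE; rewrite /dotp; under eq_bigr => t _ do rewrite xE mulr_sumr.
rewrite exchange_big; apply: eq_bigr => i _; rewrite mulr_sumr.
by apply: eq_bigr => t _; rewrite mulrCA.
Qed.

Lemma conv_dotp_ge S a b x :
  (forall p, S p -> b <= dotp a p) -> conv S x -> b <= dotp a x.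
Proof.
move=> Sge [k [p [w [Sp w_ge0 w1 xE]]]].
rewrite (dotp_conv_comb a xE) -[b]mul1r -w1 mulr_suml.
by apply: ler_sum => i _; rewrite ler_wpM2l ?Sge.
Qed.

Lemma conv_face S a b x : (forall p, S p -> b <= dotp a p) ->
  conv S x /\ dotp a x = b <-> conv (fun p => S p /\ dotp a p = b) x.
Proof.
move=> Sge; split=> [[[k [p [w [Sp w_ge0 w1 xE]]]] axb] |].
- have tight i : w i != 0 -> dotp a (p i) = b.
    have excess_ge0 j : true -> 0 <= w j * (dotp a (p j) - b).
      by move=> _; rewrite mulr_ge0 ?subr_ge0 ?Sge.
    have : \sum_j w j * (dotp a (p j) - b) = 0.
      under eq_bigr do rewrite mulrBr.
      by rewrite sumrB -mulr_suml w1 mul1r -(dotp_conv_comb a xE) axb subrr.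
    move=> /(psumr_eq0P excess_ge0) /(_ i isT) /eqP + wi_ne0.
    by rewrite mulf_eq0 (negbTE wi_ne0) subr_eq0 => /eqP.
  have [j0 /andP[_ wj0_gt0]] : exists j0, true && (0 < w j0).
    by apply: psumr_neq0P => [j _ //|]; rewrite w1; apply/eqP; rewrite oner_eq0.
  (* Points of weight zero may miss the hyperplane: replace them by p j0. *)
  pose q i := if w i == 0 then p j0 else p i.
  exists k, q, w; split=> // [i|t]; rewrite /q.
    case: eqP => [_|/eqP wi_ne0]; split; rewrite ?tight //.
    by rewrite gt_eqF.
  by rewrite xE; apply: eq_bigr => i _; case: eqP => // ->; rewrite !mul0r.
- move=> [k [p [w [Sp w_ge0 w1 xE]]]]; split.
    by exists k, p, w; split=> // i; case: (Sp i).
  rewrite (dotp_conv_comb a xE); under eq_bigr => i _ do rewrite (Sp i).2.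
  by rewrite -mulr_suml w1 mul1r.
Qed.

Lemma face_conv_tight S a b : (exists p, S p /\ dotp a p = b) ->
  (forall p, S p -> b <= dotp a p) ->
  face (conv S) (fun x => conv S x /\ dotp a x = b).
Proof.
move=> [p [Sp apb]] Sge; exists 0%N, (fun=> a), (fun=> b); split=> [_|x].
  split; first by exists p; split=> //; apply: conv_pt.
  by right=> x; apply: conv_dotp_ge.
by split=> [[Sx axb]|[Sx /(_ ord0)]].
Qed.

Lemma affine_map_conv_comb (U : finType) (f : pt R T -> pt R U) x k
    (w : 'I_k -> R) (p : 'I_k -> pt R T) :
  affine_map f -> \sum_i w i = 1 -> (forall t, x t = \sum_i w i * p i t) ->
  f x = [ffun u => \sum_i w i * f (p i) u].
Proof.
move=> [M [c fE]] w1 xE; apply/ffunP => u; rewrite !ffunE fE ffunE.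
under eq_bigr => t _ do rewrite xE mulr_sumr.
rewrite exchange_big -[c u]mul1r -w1 mulr_suml -big_split /=.
apply: eq_bigr => i _; rewrite fE ffunE mulrDr mulr_sumr; congr (_ + _).
by apply: eq_bigr => t _; rewrite mulrCA.
Qed.

Lemma conv_affine_image (U : finType) (f : pt R T -> pt R U) S
    (S' : pt R U -> Prop) :
  affine_map f -> (forall y, S' y <-> exists x, S x /\ f x = y) ->
  forall y, conv S' y <-> exists x, conv S x /\ f x = y.
Proof.
move=> f_aff S'E y; split.
- move=> [k [q [w [S'q w_ge0 w1 yE]]]].
  have /fin_all_exists2 [p Sp fpE] : forall i, exists2 x, S x & f x = q i.
    by move=> i; have [x [Sx fx]] := (S'E (q i)).1 (S'q i); exists x.
  exists [ffun t => \sum_i w i * p i t]; split.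
    by exists k, p, w; split=> // t; rewrite ffunE.
  rewrite (affine_map_conv_comb (p := p) f_aff w1) => [|t]; last by rewrite ffunE.
  by apply/ffunP => u; rewrite ffunE yE; under eq_bigr => i _ do rewrite fpE.
- move=> [x [[k [p [w [Sp w_ge0 w1 xE]]]] <-]].
  exists k, (fun i => f (p i)), w; split=> // [i|u].
    by apply/S'E; exists (p i).
  by rewrite (affine_map_conv_comb f_aff w1 xE) ffunE.
Qed.

Definition indicator (A : pred T) : pt R T := [ffun t => (t \in A)%:R].

Lemma dotp_indicator A x : dotp (indicator A) x = \sum_(t in A) x t.
Proof.
rewrite big_mkcond; apply: eq_bigr => t _; rewrite ffunE.
by case: (t \in A); rewrite ?mul1r ?mul0r.
Qed.

Lemma dotp_indicator_eq0 A x : (forall t, 0 <= x t) ->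
  dotp (indicator A) x = 0 <-> forall t, t \in A -> x t = 0.
Proof.
move=> x_ge0; rewrite dotp_indicator; split=> [|x0]; first exact: psumr_eq0P.
by rewrite big1.
Qed.

End ConvexHull.

Section RankOrder.
Variables (m : nat) (r : 'I_m -> nat).

Definition rank_order : rel 'I_m := fun i j => (r i * m + i < r j * m + j)%N.

Lemma rank_order_linear : linear_order rank_order.
Proof.
have key_inj : injective (fun i : 'I_m => r i * m + i)%N.
  move=> i j /(congr1 (modn^~ m)); rewrite !modnMDl !modn_small //.
  exact: val_inj.
split=> [i|i j ij|i j k]; rewrite /rank_order ?ltnn //; last exact: ltn_trans.
have /negbTE : (r i * m + i != r j * m + j)%N by apply: contra ij => /eqP/key_inj->.
by case: ltngtP.
Qed.

End RankOrder.

Definition lop_vertex (R : realType) (m : nat) (y : pt R (lop_idx m)) : Prop :=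
  exists L : rel 'I_m, linear_order L /\ y = char_vec R L.

Lemma char_vec_ge0 (R : realType) m (L : rel 'I_m) p : 0 <= char_vec R L p.
Proof. by rewrite ffunE; case: ifP. Qed.

Section StableSetFace.
Variables (R : realType) (n : nat) (e : rel 'I_n).

Definition stab_vertex (x : pt R 'I_n) : Prop :=
  (forall i, x i = 0 \/ x i = 1) /\ (forall i j, e i j -> x i + x j <= 1).

Lemma low_subproof (v : 'I_n) : (v < 2 * n)%N.
Proof. by rewrite mul2n -addnn ltn_addr. Qed.

Lemma high_subproof (v : 'I_n) : (n + v < 2 * n)%N.
Proof. by rewrite mul2n -addnn ltn_add2l. Qed.

Definition low (v : 'I_n) : 'I_(2 * n) := Ordinal (low_subproof v).
Definition high (v : 'I_n) : 'I_(2 * n) := Ordinal (high_subproof v).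

Lemma low_neq_high (u v : 'I_n) : low u != high v.
Proof. by rewrite -val_eqE /= neq_ltn ltn_addr. Qed.

Lemma low_high_subproof (v u : 'I_n) : ((low v, high u).1 < (low v, high u).2)%N.
Proof. by rewrite /= ltn_addr. Qed.

Definition low_high (v u : 'I_n) : lop_idx (2 * n) :=
  exist _ (low v, high u) (low_high_subproof v u).

Definition edge_coords : pred (lop_idx (2 * n)) :=
  [pred p | [exists u, exists v, (e u v || e v u) && (p == low_high v u)]].

Lemma dotp_edge_coords_ge0 y : lop_vertex y -> 0 <= dotp (indicator R edge_coords) y.
Proof.
move=> [L [_ ->]]; rewrite dotp_indicator; apply: sumr_ge0 => p _.
exact: char_vec_ge0.
Qed.

Lemma dotp_edge_coords_eq0 (L : rel 'I_(2 * n)) :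
  dotp (indicator R edge_coords) (char_vec R L) = 0 <->
  forall u v, e u v || e v u -> ~~ L (low v) (high u).
Proof.
rewrite dotp_indicator_eq0; last exact: char_vec_ge0.
split=> [L0 u v euv | noL p /existsP[u /existsP[v /andP[euv /eqP->]]]].
  have uv_coord : low_high v u \in edge_coords.
    by apply/existsP; exists u; apply/existsP; exists v; rewrite euv eqxx.
  apply/negP => Lvu; have := L0 _ uv_coord.
  by rewrite ffunE /= Lvu => /eqP; rewrite oner_eq0.
by rewrite ffunE /= (negbTE (noL _ _ euv)).
Qed.

Definition stab_proj (y : pt R (lop_idx (2 * n))) : pt R 'I_n :=
  [ffun v => y (low_high v v)].

Lemma stab_proj_affine : affine_map stab_proj.
Proof.
exists (fun v p => (p == low_high v v)%:R), 0 => y; apply/ffunP => v.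
rewrite !ffunE addr0 (bigD1 (low_high v v)) //= eqxx mul1r big1 ?addr0 // => p.
by move=> /negbTE->; rewrite mul0r.
Qed.

Definition stable_rank (S : pred 'I_n) (i : 'I_(2 * n)) : nat :=
  (let inS j := j \in image val S in
  if i < n then (if inS i then 1 else 3) else (if inS (i - n) then 2 else 0))%N.

Lemma rank_order_low_high S u v :
  rank_order (stable_rank S) (low v) (high u) = (v \in S) && (u \in S).
Proof.
rewrite /rank_order /stable_rank /= ltn_ord addKn.
have -> : (n + u < n)%N = false by rewrite ltnNge leq_addr.
rewrite !(mem_image val_inj).
have := ltn_ord u; have := ltn_ord v.
by case: (v \in S); case: (u \in S) => /= vn un; apply/idP/idP; lia.
Qed.

Lemma linear_order_stable L u v : linear_order L ->
  ~~ L (low v) (high u) -> ~~ L (low u) (high v) ->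
  ~~ (L (low u) (high u) && L (low v) (high v)).
Proof.
move=> [irr total trans] nLvu nLuv; apply/negP => /andP[Luu Lvv].
have Lhigh_low x y : ~~ L (low x) (high y) -> L (high y) (low x).
  by move=> nL; apply: (total _ _ _).2 nL; rewrite eq_sym low_neq_high.
have loop : L (low u) (low u).
  apply: (trans _ _ _ Luu (trans _ _ _ (Lhigh_low _ _ nLvu) _)).
  exact: trans Lvv (Lhigh_low _ _ nLuv).
by move: (irr (low u)); rewrite loop.
Qed.

Lemma stab_vertex_lop_face x : stab_vertex x <->
  exists y, (lop_vertex y /\ dotp (indicator R edge_coords) y = 0) /\ stab_proj y = x.
Proof.
split=> [[x01 x_stable] | [_ [[[L [L_lin ->]] /dotp_edge_coords_eq0 L0] <-]]].
  pose L := rank_order (stable_rank [pred v | x v == 1]).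
  exists (char_vec R L); split; first split.
  - by exists L; split; first exact: rank_order_linear.
  - apply/dotp_edge_coords_eq0 => u v euv; rewrite /L rank_order_low_high !inE.
    apply/negP => /andP[/eqP xv1 /eqP xu1].
    by case/orP: euv => /x_stable; rewrite xu1 xv1; lra.
  - apply/ffunP => v; rewrite !ffunE /= /L rank_order_low_high andbb inE.
    by case: (x01 v) => ->; rewrite ?eqxx // eq_sym oner_eq0.
split=> [v|u v euv]; rewrite !ffunE /=; first by case: ifP; [right|left].
have := linear_order_stable L_lin (L0 u v _) (L0 v u _).
rewrite euv orbT => /(_ isT isT).
by case: (L (low u) _); case: (L (low v) _) => // _; lra.
Qed.

End StableSetFace.

Theorem lemma1 (R : realType) (n : nat) (e : rel 'I_n) :
  simple_graph e ->
  exists (F : pt R (lop_idx (2 * n)) -> Prop)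
         (alpha : pt R (lop_idx (2 * n)) -> pt R 'I_n),
    [/\ face (@LOP R (2 * n)) F, affine_map alpha
      & forall y, @STAB R n e y <-> exists x, F x /\ alpha x = y].
Proof.
(* Not needed: STAB(G) and edge_coords only see the symmetric closure of e. *)
move=> _.
have face_ge0 := @dotp_edge_coords_ge0 R n e.
have stab_face_vertex := @stab_vertex_lop_face R n e.
exists (fun y => @LOP R (2 * n) y /\ dotp (indicator R (edge_coords e)) y = 0).
exists (@stab_proj R n); split.
- apply: face_conv_tight face_ge0.
  have [|y [y_face _]] := (stab_face_vertex [ffun=> 0]).1.
    by split=> [i|i j _]; rewrite !ffunE; [left | rewrite addr0 ler01].
  by exists y.
- exact: stab_proj_affine.
- move=> x.
  apply: iff_trans (conv_affine_image (@stab_proj_affine R n) stab_face_vertex x) _.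
  by split=> -[y [/(conv_face _ face_ge0) F_y <-]]; exists y.
Qed.
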